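(* Let $C$ be a circle in the plane and let $E$ be an ellipse lying in the interior of the disk bounded by $C$, such that $E$ is a Poncelet $3$-ellipse for $C$, and such that the center of $E$ coincides with the center of $C$. For each triangle that is inscribed in $C$ (all three vertices on $C$) and circumscribes $E$ (each side tangent to $E$), form three circles: for each side of the triangle, the circle centered at the midpoint of that side and passing through the vertex of the triangle opposite to that side. Then the sum of the areas of these three circles is the same for every such triangle; that is, it depends only on the pair $(E, C)$.
   Context: An ellipse $E$ in the interior of a circle $C$ is called a Poncelet $3$-ellipse (for $C$) if there exists a triangle inscribed in $C$ whose three sides are tangent to $E$; by Poncelet's closure theorem, every point of $C$ is then a vertex of such a triangle (these triangles are called Poncelet triangles). *)

From Stdlib Require Import Reals Lra.
Open Scope R_scope.

Definition point := (R * R)%type.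

Definition dist2 (p q : point) : R :=
  (fst p - fst q) ^ 2 + (snd p - snd q) ^ 2.

Definition dist (p q : point) : R := sqrt (dist2 p q).

Definition on_circle (o : point) (r : R) (p : point) : Prop := dist o p = r.

(* Ellipse with center c, semi-axes a, b > 0, first axis along the unit
   vector (u1, u2), second axis along (-u2, u1). *)
Record ellipse := mkEllipse {
  e_center : point; e_a : R; e_b : R; e_u1 : R; e_u2 : R }.

Definition wf_ellipse (E : ellipse) : Prop :=
  0 < e_a E /\ 0 < e_b E /\ e_u1 E ^ 2 + e_u2 E ^ 2 = 1.

Definition on_ellipse (E : ellipse) (p : point) : Prop :=
  let x := fst p - fst (e_center E) in
  let y := snd p - snd (e_center E) in
  let s := x * e_u1 E + y * e_u2 E in
  let t := - x * e_u2 E + y * e_u1 E in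
  s ^ 2 / e_a E ^ 2 + t ^ 2 / e_b E ^ 2 = 1.

Definition on_line (a b p : point) : Prop :=
  (fst b - fst a) * (snd p - snd a) - (snd b - snd a) * (fst p - fst a) = 0.

Definition on_segment (a b p : point) : Prop :=
  exists t, 0 <= t <= 1 /\
    p = (fst a + t * (fst b - fst a), snd a + t * (snd b - snd a)).

Definition side_tangent (E : ellipse) (a b : point) : Prop :=
  exists p, on_ellipse E p /\ on_segment a b p /\
    forall q, on_ellipse E q -> on_line a b q -> q = p.

Definition poncelet_triangle (o : point) (r : R) (E : ellipse)
    (A B C : point) : Prop :=
  A <> B /\ B <> C /\ C <> A /\
  on_circle o r A /\ on_circle o r B /\ on_circle o r C /\
  side_tangent E A B /\ side_tangent E B C /\ side_tangent E C A.

Definition poncelet3 (o : point) (r : R) (E : ellipse) : Prop :=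
  exists A B C, poncelet_triangle o r E A B C.

Definition ellipse_inside (o : point) (r : R) (E : ellipse) : Prop :=
  forall p, on_ellipse E p -> dist o p < r.

Definition midpoint (p q : point) : point :=
  ((fst p + fst q) / 2, (snd p + snd q) / 2).

Definition circle_area (r : R) : R := PI * r ^ 2.

Definition median_circles_area (A B C : point) : R :=
  circle_area (dist (midpoint B C) A) +
  circle_area (dist (midpoint C A) B) +
  circle_area (dist (midpoint A B) C).

(* After a rigid motion the ellipse is [x^2/a^2 + y^2/b^2 = 1] and the circle
   [x^2 + y^2 = r^2]. For a triangle ABC inscribed in the circle the three areas
   add up to [PI (18 r^2 - 6 S) / 4] with [S = A.B + B.C + C.A], so it suffices
   to show that [S] is the same for all Poncelet triangles.

   If a chord VW of the circle touches the ellipse, then [p xV xW + q yV yW = s] with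
   [p = r^2 - a^2 + b^2], [q = r^2 + a^2 - b^2] and [s = r^2 (a^2 + b^2 - r^2)].
   Hence both sides through a vertex A lie on the line [(p xA, q yA) . Z = s];
   since the midpoint of the chord BC is the foot of the perpendicular from the
   centre to that line, [(S + r^2) ((p xA)^2 + (q yA)^2) = 2 s (p xA^2 + q yA^2 + s)],
   and likewise at B and C. On the circle the quotient of the two brackets is a
   Moebius function of [xA^2]; if it were not constant (and [s <> 0]), the three
   vertices would have the same [|x|] and [|y|], so two of them would be
   antipodal, whereas a diameter never touches a centred ellipse. So the
   quotient is constant, and the identity at a single vertex determines [S]. *)

From Pilot Require Import Defs.
From Stdlib Require Import Reals Lra Psatz.
Open Scope R_scope.

Definition origin : point := (0, 0).

Definition std_ellipse (a b : R) : ellipse := mkEllipse origin a b 1 0.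

Lemma on_std_ellipse (a b : R) (P : point) :
  on_ellipse (std_ellipse a b) P <-> fst P ^ 2 / a ^ 2 + snd P ^ 2 / b ^ 2 = 1.
Proof.
  destruct P as [x y]; unfold on_ellipse; simpl.
  replace ((x - 0) * 1 + (y - 0) * 0) with x by ring.
  replace (- (x - 0) * 0 + (y - 0) * 1) with y by ring.
  reflexivity.
Qed.

Lemma dist2_nonneg (P Q : point) : 0 <= dist2 P Q.
Proof.
  unfold dist2; pose proof (pow2_ge_0 (fst P - fst Q)); pose proof (pow2_ge_0 (snd P - snd Q)).
  lra.
Qed.

Lemma dist2_pos (P Q : point) : P <> Q -> 0 < dist2 P Q.
Proof.
  destruct P as [x1 y1], Q as [x2 y2]; unfold dist2; simpl; intros hne.
  destruct (Rle_lt_dec ((x1 - x2) ^ 2 + (y1 - y2) ^ 2) 0) as [hle | ?]; [| assumption].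
  pose proof (pow2_ge_0 (x1 - x2)); pose proof (pow2_ge_0 (y1 - y2)).
  exfalso; apply hne; f_equal; nra.
Qed.

Lemma on_circle_origin (r : R) (P : point) :
  on_circle origin r P -> fst P ^ 2 + snd P ^ 2 = r ^ 2.
Proof.
  unfold on_circle, Defs.dist; intros <-.
  rewrite pow2_sqrt by apply dist2_nonneg.
  unfold dist2, origin; simpl; ring.
Qed.

Definition frame (E : ellipse) (P : point) : point :=
  let x := fst P - fst (e_center E) in
  let y := snd P - snd (e_center E) in
  (x * e_u1 E + y * e_u2 E, - x * e_u2 E + y * e_u1 E).

Definition unframe (E : ellipse) (Q : point) : point :=
  (fst (e_center E) + fst Q * e_u1 E - snd Q * e_u2 E,
   snd (e_center E) + fst Q * e_u2 E + snd Q * e_u1 E).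

Section Frame.

Variable E : ellipse.
Hypothesis unit_axis : e_u1 E ^ 2 + e_u2 E ^ 2 = 1.

Lemma frame_unframe (Q : point) : frame E (unframe E Q) = Q.
Proof.
  destruct Q as [x y]; unfold frame, unframe; simpl; f_equal.
  - transitivity (x * (e_u1 E ^ 2 + e_u2 E ^ 2)); [ring | rewrite unit_axis; ring].
  - transitivity (y * (e_u1 E ^ 2 + e_u2 E ^ 2)); [ring | rewrite unit_axis; ring].
Qed.

Lemma frame_center : frame E (e_center E) = origin.
Proof. unfold frame, origin; f_equal; ring. Qed.

Lemma dist2_frame (P Q : point) : dist2 (frame E P) (frame E Q) = dist2 P Q.
Proof.
  unfold dist2, frame; simpl.
  transitivity ((e_u1 E ^ 2 + e_u2 E ^ 2) *
    ((fst P - fst Q) ^ 2 + (snd P - snd Q) ^ 2)); [ring | rewrite unit_axis; ring].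
Qed.

Lemma dist_frame (P Q : point) : Defs.dist (frame E P) (frame E Q) = Defs.dist P Q.
Proof. unfold Defs.dist; rewrite dist2_frame; reflexivity. Qed.

Lemma frame_midpoint (P Q : point) :
  frame E (midpoint P Q) = midpoint (frame E P) (frame E Q).
Proof. unfold frame, midpoint; simpl; f_equal; field. Qed.

Lemma on_ellipse_frame (P : point) :
  on_ellipse (std_ellipse (e_a E) (e_b E)) (frame E P) <-> on_ellipse E P.
Proof. rewrite on_std_ellipse; reflexivity. Qed.

Lemma on_line_frame (A B P : point) :
  on_line (frame E A) (frame E B) (frame E P) <-> on_line A B P.
Proof.
  unfold on_line, frame; simpl.
  match goal with |- ?l = 0 <-> ?c = 0 =>
    replace l with ((e_u1 E ^ 2 + e_u2 E ^ 2) * c) by ring end.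
  rewrite unit_axis, Rmult_1_l; reflexivity.
Qed.

Lemma on_segment_frame (A B P : point) :
  on_segment A B P -> on_segment (frame E A) (frame E B) (frame E P).
Proof.
  intros [t [ht ->]]; exists t; split; [exact ht |].
  unfold frame; simpl; f_equal; ring.
Qed.

Lemma side_tangent_frame (A B : point) :
  side_tangent E A B ->
  side_tangent (std_ellipse (e_a E) (e_b E)) (frame E A) (frame E B).
Proof.
  intros [T [hT [hseg huniq]]].
  exists (frame E T); repeat split.
  - now apply on_ellipse_frame.
  - now apply on_segment_frame.
  - intros Q hQ hl; rewrite <- (frame_unframe Q); f_equal; apply huniq.
    + now apply on_ellipse_frame; rewrite frame_unframe.
    + now apply on_line_frame; rewrite frame_unframe.
Qed.

Lemma poncelet_triangle_frame (r : R) (A B C : point) :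
  poncelet_triangle (e_center E) r E A B C ->
  poncelet_triangle origin r (std_ellipse (e_a E) (e_b E))
    (frame E A) (frame E B) (frame E C).
Proof.
  assert (frame_neq : forall P Q, P <> Q -> frame E P <> frame E Q).
  { intros P Q hne heq; apply hne.
    pose proof (dist2_pos P Q hne) as hpos.
    rewrite <- dist2_frame, heq in hpos; unfold dist2 in hpos; lra. }
  assert (circle : forall P, on_circle (e_center E) r P -> on_circle origin r (frame E P)).
  { intros P; unfold on_circle; rewrite <- frame_center, dist_frame; auto. }
  intros (hAB & hBC & hCA & cA & cB & cC & tAB & tBC & tCA).
  repeat split; auto using side_tangent_frame.
Qed.

Lemma ellipse_inside_frame (r : R) :
  ellipse_inside (e_center E) r E ->
  ellipse_inside origin r (std_ellipse (e_a E) (e_b E)).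
Proof.
  intros hin Q hQ.
  rewrite <- frame_center, <- (frame_unframe Q), dist_frame.
  apply hin, on_ellipse_frame; rewrite frame_unframe; exact hQ.
Qed.

Lemma median_circles_area_frame (A B C : point) :
  median_circles_area (frame E A) (frame E B) (frame E C) =
  median_circles_area A B C.
Proof.
  unfold median_circles_area; rewrite <- !frame_midpoint, !dist_frame; reflexivity.
Qed.

End Frame.

Definition dot (P Q : point) : R := fst P * fst Q + snd P * snd Q.

Lemma median_circles_area_centered (r : R) (A B C : point) :
  on_circle origin r A -> on_circle origin r B -> on_circle origin r C ->
  median_circles_area A B C =
  PI * (18 * r ^ 2 - 6 * (dot A B + dot B C + dot C A)) / 4.
Proof.
  intros cA cB cC; apply on_circle_origin in cA, cB, cC.
  assert (hsum : dist2 (midpoint B C) A + dist2 (midpoint C A) B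
                 + dist2 (midpoint A B) C
               = (18 * r ^ 2 - 6 * (dot A B + dot B C + dot C A)) / 4).
  { unfold dist2, midpoint, dot; simpl; lra. }
  unfold median_circles_area, circle_area, Defs.dist.
  rewrite !pow2_sqrt by apply dist2_nonneg.
  transitivity (PI * (dist2 (midpoint B C) A + dist2 (midpoint C A) B
                      + dist2 (midpoint A B) C)); [ring | rewrite hsum; field].
Qed.

Lemma weighted_sum_sq_pos (u v x y : R) :
  0 < u -> 0 < v -> 0 < x ^ 2 + y ^ 2 -> 0 < u * x ^ 2 + v * y ^ 2.
Proof.
  intros hu hv hxy.
  pose proof (pow2_ge_0 x); pose proof (pow2_ge_0 y).
  destruct (Rle_lt_dec (x ^ 2) 0).
  - assert (0 < v * y ^ 2) by (apply Rmult_lt_0_compat; lra). nra.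
  - assert (0 < u * x ^ 2) by (apply Rmult_lt_0_compat; lra). nra.
Qed.

Lemma scale_nonzero_vector_eq0 (l d1 d2 : R) :
  0 < d1 ^ 2 + d2 ^ 2 -> l * d1 = 0 -> l * d2 = 0 -> l = 0.
Proof.
  intros hd h1 h2.
  destruct (Rmult_integral _ _ h1) as [| hd1]; [assumption |].
  destruct (Rmult_integral _ _ h2) as [| hd2]; [assumption |].
  rewrite hd1, hd2 in hd; lra.
Qed.

(* The second conjunct says that [B + C] is parallel to [n]: the midpoint of the
   chord is the foot of the perpendicular from the centre. *)
Lemma chord_sum_parallel (n1 n2 c xB yB xC yC : R) :
  xB ^ 2 + yB ^ 2 = xC ^ 2 + yC ^ 2 ->
  n1 * xB + n2 * yB = c -> n1 * xC + n2 * yC = c ->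
  0 < (xB - xC) ^ 2 + (yB - yC) ^ 2 ->
  n1 * (xB + xC) + n2 * (yB + yC) = 2 * c /\
  n1 * (yB + yC) - n2 * (xB + xC) = 0.
Proof.
  intros hBC hB hC hd; split; [lra |].
  assert (hnv : n1 * (xB - xC) + n2 * (yB - yC) = 0) by lra.
  assert (huv : (xB + xC) * (xB - xC) + (yB + yC) * (yB - yC) = 0) by lra.
  apply (scale_nonzero_vector_eq0 _ (xB - xC) (yB - yC) hd).
  - transitivity ((yB + yC) * (n1 * (xB - xC) + n2 * (yB - yC))
                  - n2 * ((xB + xC) * (xB - xC) + (yB + yC) * (yB - yC))); [ring |].
    rewrite hnv, huv; ring.
  - transitivity (n1 * ((xB + xC) * (xB - xC) + (yB + yC) * (yB - yC))
                  - (xB + xC) * (n1 * (xB - xC) + n2 * (yB - yC))); [ring |].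
    rewrite hnv, huv; ring.
Qed.

Lemma pow2_eq_cases (x y : R) : x ^ 2 = y ^ 2 -> x = y \/ x = - y.
Proof. intros h; apply Rsqr_eq; rewrite !Rsqr_pow2; exact h. Qed.

Lemma equal_squares_antipodal (xA yA xB yB xC yC : R) :
  xB ^ 2 = xA ^ 2 -> yB ^ 2 = yA ^ 2 -> xC ^ 2 = xA ^ 2 -> yC ^ 2 = yA ^ 2 ->
  (xA, yA) <> (xB, yB) -> (xB, yB) <> (xC, yC) -> (xC, yC) <> (xA, yA) ->
  (xB = - xA /\ yB = - yA) \/ (xC = - xB /\ yC = - yB) \/ (xA = - xC /\ yA = - yC).
Proof.
  intros hxB hyB hxC hyC hAB hBC hCA.
  destruct (pow2_eq_cases _ _ hxB) as [-> | ->], (pow2_eq_cases _ _ hyB) as [-> | ->],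
    (pow2_eq_cases _ _ hxC) as [-> | ->], (pow2_eq_cases _ _ hyC) as [-> | ->];
    first [congruence | lra].
Qed.

Lemma poncelet_triangle_rotate {o : point} {r : R} {E : ellipse} {A B C : point} :
  poncelet_triangle o r E A B C -> poncelet_triangle o r E B C A.
Proof. unfold poncelet_triangle; tauto. Qed.

Section StandardPosition.

Variables a b r : R.
Hypotheses (a_pos : 0 < a) (b_pos : 0 < b).

Lemma tangent_direction_conjugate (x y d1 d2 : R) :
  0 < d1 ^ 2 + d2 ^ 2 -> x ^ 2 / a ^ 2 + y ^ 2 / b ^ 2 = 1 ->
  (forall l, (x + l * d1) ^ 2 / a ^ 2 + (y + l * d2) ^ 2 / b ^ 2 = 1 -> l = 0) ->
  x * d1 / a ^ 2 + y * d2 / b ^ 2 = 0.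
Proof.
  intros hd hT huniq.
  set (c := x * d1 / a ^ 2 + y * d2 / b ^ 2).
  set (w := d1 ^ 2 / a ^ 2 + d2 ^ 2 / b ^ 2).
  assert (hw : 0 < w).
  { assert (hab : 0 < a ^ 2 * b ^ 2) by (apply Rmult_lt_0_compat; apply pow_lt; lra).
    assert (w * (a ^ 2 * b ^ 2) = b ^ 2 * d1 ^ 2 + a ^ 2 * d2 ^ 2)
      by (unfold w; field; lra).
    assert (0 < b ^ 2 * d1 ^ 2 + a ^ 2 * d2 ^ 2)
      by (apply weighted_sum_sq_pos; try apply pow_lt; lra).
    apply Rmult_lt_reg_r with (a ^ 2 * b ^ 2); lra. }
  assert (hexp : forall l, (x + l * d1) ^ 2 / a ^ 2 + (y + l * d2) ^ 2 / b ^ 2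
                         = x ^ 2 / a ^ 2 + y ^ 2 / b ^ 2 + l * (2 * c + l * w))
    by (intros l; unfold c, w; field; lra).
  (* The line meets the ellipse a second time at [l = -2c/w]. *)
  assert (hsecond : -2 * c / w = 0).
  { apply huniq; rewrite hexp, hT.
    replace (2 * c + -2 * c / w * w) with 0 by (field; lra); ring. }
  assert (hc : c = -2 * c / w * (- w / 2)) by (field; lra).
  rewrite hsecond in hc; lra.
Qed.

Lemma side_tangent_std_eq (V W : point) :
  V <> W -> side_tangent (std_ellipse a b) V W ->
  (fst W * snd V - snd W * fst V) ^ 2
  = a ^ 2 * (snd W - snd V) ^ 2 + b ^ 2 * (fst W - fst V) ^ 2.
Proof.
  destruct V as [x1 y1], W as [x2 y2]; cbn [fst snd].
  intros hne [T [hT [[t [_ ->]] huniq]]].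
  apply on_std_ellipse in hT; cbn [fst snd] in hT.
  assert (hd : 0 < (x2 - x1) ^ 2 + (y2 - y1) ^ 2)
    by exact (dist2_pos _ _ (not_eq_sym hne)).
  set (d1 := x2 - x1) in *; set (d2 := y2 - y1) in *.
  set (t1 := x1 + t * d1) in *; set (t2 := y1 + t * d2) in *.
  assert (hconj : t1 * d1 / a ^ 2 + t2 * d2 / b ^ 2 = 0).
  { apply tangent_direction_conjugate; auto.
    intros l hl.
    assert (heq : (t1 + l * d1, t2 + l * d2) = (t1, t2)).
    { apply huniq.
      - apply on_std_ellipse; exact hl.
      - unfold on_line, t1, t2, d1, d2; cbn [fst snd]; ring. }
    injection heq as e1 e2.
    apply (scale_nonzero_vector_eq0 l d1 d2); lra. }
  assert (hlag : (a ^ 2 * d2 ^ 2 + b ^ 2 * d1 ^ 2) * (t1 ^ 2 / a ^ 2 + t2 ^ 2 / b ^ 2)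
                 = (d2 * t1 - d1 * t2) ^ 2
                   + a ^ 2 * b ^ 2 * (t1 * d1 / a ^ 2 + t2 * d2 / b ^ 2) ^ 2)
    by (field; lra).
  rewrite hT, hconj in hlag.
  replace (x2 * y1 - y2 * x1) with (d1 * t2 - d2 * t1) by (unfold t1, t2, d1, d2; ring).
  lra.
Qed.

Lemma std_axes_lt_radius :
  ellipse_inside origin r (std_ellipse a b) -> a < r /\ b < r.
Proof.
  intros hin; split.
  - assert (h := hin (a, 0)); unfold Defs.dist, dist2, origin in h; cbn [fst snd] in h.
    replace ((0 - a) ^ 2 + (0 - 0) ^ 2) with (a ^ 2) in h by ring.
    rewrite sqrt_pow2 in h by lra; apply h, on_std_ellipse; cbn [fst snd]; field; lra.
  - assert (h := hin (0, b)); unfold Defs.dist, dist2, origin in h; cbn [fst snd] in h.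
    replace ((0 - 0) ^ 2 + (0 - b) ^ 2) with (b ^ 2) in h by ring.
    rewrite sqrt_pow2 in h by lra; apply h, on_std_ellipse; cbn [fst snd]; field; lra.
Qed.

Let p := r ^ 2 - a ^ 2 + b ^ 2.
Let q := r ^ 2 + a ^ 2 - b ^ 2.
Let s := r ^ 2 * (a ^ 2 + b ^ 2 - r ^ 2).
Let offset (x y : R) := p * x ^ 2 + q * y ^ 2 + s.
Let weight (x y : R) := (p * x) ^ 2 + (q * y) ^ 2.

Lemma chord_tangent_relation (x1 y1 x2 y2 : R) :
  x1 ^ 2 + y1 ^ 2 = r ^ 2 -> x2 ^ 2 + y2 ^ 2 = r ^ 2 ->
  0 < (x2 - x1) ^ 2 + (y2 - y1) ^ 2 ->
  (x2 * y1 - y2 * x1) ^ 2 = a ^ 2 * (y2 - y1) ^ 2 + b ^ 2 * (x2 - x1) ^ 2 ->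
  p * x1 * x2 + q * y1 * y2 = s.
Proof.
  intros h1 h2 hd ht.
  set (g := x1 * x2 + y1 * y2).
  assert (hh : (x2 * y1 - y2 * x1) ^ 2 = (r ^ 2 - g) * (r ^ 2 + g)).
  { assert (hl : (x1 ^ 2 + y1 ^ 2) * (x2 ^ 2 + y2 ^ 2) = g ^ 2 + (x2 * y1 - y2 * x1) ^ 2)
      by (unfold g; ring).
    rewrite h1, h2 in hl; lra. }
  assert (hy : r ^ 2 * (y2 - y1) ^ 2 = (r ^ 2 + x1 * x2 - y1 * y2) * (r ^ 2 - g))
    by (unfold g; nra).
  assert (hx : r ^ 2 * (x2 - x1) ^ 2 = (r ^ 2 - x1 * x2 + y1 * y2) * (r ^ 2 - g))
    by (unfold g; nra).
  assert (hfac : (r ^ 2 - g) * (p * x1 * x2 + q * y1 * y2 - s) = 0).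
  { transitivity (r ^ 2 * (x2 * y1 - y2 * x1) ^ 2
                  - a ^ 2 * (r ^ 2 * (y2 - y1) ^ 2) - b ^ 2 * (r ^ 2 * (x2 - x1) ^ 2)).
    - rewrite hh, hy, hx; unfold g, p, q, s; ring.
    - rewrite ht; ring. }
  assert (hg : 2 * (r ^ 2 - g) = (x2 - x1) ^ 2 + (y2 - y1) ^ 2) by (unfold g; lra).
  destruct (Rmult_integral _ _ hfac); lra.
Qed.

Lemma side_tangent_std_relation (V W : point) :
  on_circle origin r V -> on_circle origin r W -> V <> W ->
  side_tangent (std_ellipse a b) V W ->
  p * fst V * fst W + q * snd V * snd W = s.
Proof.
  intros cV cW hne ht.
  apply chord_tangent_relation; try apply on_circle_origin; auto.
  - exact (dist2_pos W V (not_eq_sym hne)).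
  - exact (side_tangent_std_eq V W hne ht).
Qed.

Lemma vertex_identity (xA yA xB yB xC yC : R) :
  xB ^ 2 + yB ^ 2 = r ^ 2 -> xC ^ 2 + yC ^ 2 = r ^ 2 ->
  p * xA * xB + q * yA * yB = s -> p * xA * xC + q * yA * yC = s ->
  0 < (xB - xC) ^ 2 + (yB - yC) ^ 2 ->
  (xA * xB + yA * yB + (xB * xC + yB * yC) + (xC * xA + yC * yA) + r ^ 2) * weight xA yA
  = 2 * s * offset xA yA.
Proof.
  intros hB hC eB eC hd.
  destruct (chord_sum_parallel (p * xA) (q * yA) s xB yB xC yC)
    as [hdot hcross]; [lra | assumption.. |].
  unfold weight, offset.
  set (n1 := p * xA) in *; set (n2 := q * yA) in *.
  set (u1 := xB + xC) in *; set (u2 := yB + yC) in *.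
  assert (hS : xA * xB + yA * yB + (xB * xC + yB * yC) + (xC * xA + yC * yA) + r ^ 2
               = xA * u1 + yA * u2 + (u1 ^ 2 + u2 ^ 2) / 2) by (unfold u1, u2; lra).
  (* Binet-Cauchy identities for [A . u] and [u . u] against [n . n]. *)
  transitivity ((xA * n1 + yA * n2) * (n1 * u1 + n2 * u2)
                + (xA * n2 - yA * n1) * (n2 * u1 - n1 * u2)
                + ((n1 * u1 + n2 * u2) ^ 2 + (n1 * u2 - n2 * u1) ^ 2) / 2).
  - rewrite hS; field.
  - replace (n2 * u1 - n1 * u2) with 0 by lra.
    rewrite hdot, hcross; unfold n1, n2; field.
Qed.

Lemma std_vertex_identity (A B C : point) :
  poncelet_triangle origin r (std_ellipse a b) A B C ->
  (dot A B + dot B C + dot C A + r ^ 2) * weight (fst A) (snd A)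
  = 2 * s * offset (fst A) (snd A).
Proof.
  intros (hAB & hBC & hCA & cA & cB & cC & tAB & tBC & tCA).
  pose proof (side_tangent_std_relation A B cA cB hAB tAB) as eAB.
  pose proof (side_tangent_std_relation C A cC cA hCA tCA) as eCA.
  pose proof (dist2_pos B C hBC) as hd.
  apply on_circle_origin in cB, cC.
  destruct A as [xA yA], B as [xB yB], C as [xC yC].
  unfold dot, dist2 in *; cbn [fst snd] in *.
  apply vertex_identity; (assumption || lra).
Qed.

Lemma offset_on_circle (x y : R) :
  x ^ 2 + y ^ 2 = r ^ 2 -> offset x y = 2 * (b ^ 2 * x ^ 2 + a ^ 2 * y ^ 2).
Proof. intros h; unfold offset, p, q, s; rewrite <- h; ring. Qed.

Lemma diameter_not_tangent_chord (x y : R) :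
  0 < r -> x ^ 2 + y ^ 2 = r ^ 2 -> p * x * (- x) + q * y * (- y) = s -> False.
Proof.
  intros hr h e.
  assert (hzero : b ^ 2 * x ^ 2 + a ^ 2 * y ^ 2 = 0)
    by (pose proof (offset_on_circle x y h); unfold offset in *; lra).
  assert (0 < a ^ 2) by (apply pow_lt; lra); assert (0 < b ^ 2) by (apply pow_lt; lra).
  assert (0 <= b ^ 2 * x ^ 2) by (apply Rmult_le_pos; [lra | apply pow2_ge_0]).
  assert (0 <= a ^ 2 * y ^ 2) by (apply Rmult_le_pos; [lra | apply pow2_ge_0]).
  assert (hx : b ^ 2 * x ^ 2 = 0) by lra; assert (hy : a ^ 2 * y ^ 2 = 0) by lra.
  apply Rmult_integral in hx as [| hx]; [lra |].
  apply Rmult_integral in hy as [| hy]; [lra |].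
  assert (0 < r ^ 2) by (apply pow_lt; lra).
  lra.
Qed.

Lemma std_triangle_abs_x_not_constant (A B C : point) :
  0 < r -> poncelet_triangle origin r (std_ellipse a b) A B C ->
  fst B ^ 2 = fst A ^ 2 -> fst C ^ 2 = fst A ^ 2 -> False.
Proof.
  intros hr (hAB & hBC & hCA & cA & cB & cC & tAB & tBC & tCA) hB hC.
  pose proof (side_tangent_std_relation A B cA cB hAB tAB) as eAB.
  pose proof (side_tangent_std_relation B C cB cC hBC tBC) as eBC.
  pose proof (side_tangent_std_relation C A cC cA hCA tCA) as eCA.
  apply on_circle_origin in cA, cB, cC.
  destruct A as [xA yA], B as [xB yB], C as [xC yC]; cbn [fst snd] in *.
  destruct (equal_squares_antipodal xA yA xB yB xC yC)
    as [[-> ->] | [[-> ->] | [-> ->]]]; try assumption; try lra.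
  - exact (diameter_not_tangent_chord xA yA hr cA eAB).
  - exact (diameter_not_tangent_chord xB yB hr cB eBC).
  - exact (diameter_not_tangent_chord xC yC hr cC eCA).
Qed.

(* On the circle, [offset] and [weight] are affine in [x ^ 2], so their ratio
   is a Moebius function of [x ^ 2] with determinant [kappa]. Given [a, b < r],
   [kappa] vanishes exactly when [a = b] or [r = a + b]. *)
Let kappa := 2 * (b ^ 2 - a ^ 2) * r ^ 2 * (q ^ 2 - 4 * a ^ 2 * r ^ 2).

Lemma offset_weight_cross (x1 y1 x2 y2 : R) :
  x1 ^ 2 + y1 ^ 2 = r ^ 2 -> x2 ^ 2 + y2 ^ 2 = r ^ 2 ->
  offset x1 y1 * weight x2 y2 - offset x2 y2 * weight x1 y1 = kappa * (x1 ^ 2 - x2 ^ 2).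
Proof.
  assert (hweight : forall x y, x ^ 2 + y ^ 2 = r ^ 2 ->
            weight x y = q ^ 2 * r ^ 2 + (p ^ 2 - q ^ 2) * x ^ 2).
  { intros x y h; unfold weight.
    transitivity (p ^ 2 * x ^ 2 + q ^ 2 * y ^ 2); [ring |].
    replace (y ^ 2) with (r ^ 2 - x ^ 2) by lra; ring. }
  assert (hoffset : forall x y, x ^ 2 + y ^ 2 = r ^ 2 ->
            offset x y = 2 * a ^ 2 * r ^ 2 + 2 * (b ^ 2 - a ^ 2) * x ^ 2).
  { intros x y h; rewrite offset_on_circle by exact h.
    replace (y ^ 2) with (r ^ 2 - x ^ 2) by lra; ring. }
  intros h1 h2; rewrite !hweight, !hoffset by assumption.
  unfold kappa, p, q; ring.
Qed.

Lemma vertex_identity_cross (S1 S2 x1 y1 x2 y2 : R) :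
  x1 ^ 2 + y1 ^ 2 = r ^ 2 -> x2 ^ 2 + y2 ^ 2 = r ^ 2 ->
  (S1 + r ^ 2) * weight x1 y1 = 2 * s * offset x1 y1 ->
  (S2 + r ^ 2) * weight x2 y2 = 2 * s * offset x2 y2 ->
  (S1 - S2) * weight x1 y1 * weight x2 y2 = 2 * s * kappa * (x1 ^ 2 - x2 ^ 2).
Proof.
  intros h1 h2 v1 v2.
  transitivity ((S1 + r ^ 2) * weight x1 y1 * weight x2 y2
                - (S2 + r ^ 2) * weight x2 y2 * weight x1 y1); [ring |].
  rewrite v1, v2.
  transitivity (2 * s * (offset x1 y1 * weight x2 y2 - offset x2 y2 * weight x1 y1));
    [ring |].
  rewrite offset_weight_cross by assumption; ring.
Qed.

Lemma std_poncelet_condition (A B C : point) :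
  0 < r -> poncelet_triangle origin r (std_ellipse a b) A B C -> s * kappa = 0.
Proof.
  intros hr T.
  pose proof T as (_ & _ & _ & cA & cB & cC & _).
  pose proof (std_vertex_identity A B C T) as vA.
  pose proof (std_vertex_identity B C A (poncelet_triangle_rotate T)) as vB.
  pose proof (std_vertex_identity C A B
                (poncelet_triangle_rotate (poncelet_triangle_rotate T))) as vC.
  set (S := dot A B + dot B C + dot C A) in vA.
  replace (dot B C + dot C A + dot A B) with S in vB by (unfold S; ring).
  replace (dot C A + dot A B + dot B C) with S in vC by (unfold S; ring).
  destruct (Req_dec (s * kappa) 0) as [| hsk]; [assumption | exfalso].
  assert (abs_x_eq : forall V, on_circle origin r V ->
            (S + r ^ 2) * weight (fst V) (snd V) = 2 * s * offset (fst V) (snd V) ->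
            fst V ^ 2 = fst A ^ 2).
  { intros V cV vV.
    pose proof (vertex_identity_cross S S _ _ _ _
                  (on_circle_origin _ _ cV) (on_circle_origin _ _ cA) vV vA) as h.
    rewrite Rminus_diag, !Rmult_0_l in h.
    symmetry in h; apply Rmult_integral in h as [h | h]; lra. }
  exact (std_triangle_abs_x_not_constant A B C hr T (abs_x_eq B cB vB) (abs_x_eq C cC vC)).
Qed.

Lemma weight_pos (x y : R) :
  a < r -> b < r -> x ^ 2 + y ^ 2 = r ^ 2 -> 0 < weight x y.
Proof.
  intros har hbr h; unfold weight.
  assert (0 < p) by (unfold p; nra); assert (0 < q) by (unfold q; nra).
  rewrite !Rpow_mult_distr; apply weighted_sum_sq_pos; [| | rewrite h]; apply pow_lt; lra.
Qed.

Theorem median_circles_area_std (A B C A' B' C' : point) :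
  ellipse_inside origin r (std_ellipse a b) ->
  poncelet_triangle origin r (std_ellipse a b) A B C ->
  poncelet_triangle origin r (std_ellipse a b) A' B' C' ->
  median_circles_area A B C = median_circles_area A' B' C'.
Proof.
  intros hin T T'.
  destruct (std_axes_lt_radius hin) as [har hbr].
  pose proof T as (_ & _ & _ & cA & cB & cC & _).
  pose proof T' as (_ & _ & _ & cA' & cB' & cC' & _).
  rewrite (median_circles_area_centered r A B C),
          (median_circles_area_centered r A' B' C') by assumption.
  apply on_circle_origin in cA, cA'.
  pose proof (vertex_identity_cross _ _ _ _ _ _ cA cA'
                (std_vertex_identity A B C T) (std_vertex_identity A' B' C' T')) as h.
  replace (2 * s * kappa) with (2 * (s * kappa)) in h by ring.
  rewrite (std_poncelet_condition A B C ltac:(lra) T), Rmult_0_r, Rmult_0_l in h.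
  pose proof (weight_pos _ _ har hbr cA); pose proof (weight_pos _ _ har hbr cA').
  apply Rmult_integral in h as [h | h]; [apply Rmult_integral in h as [h | h] |];
    [| lra | lra].
  replace (dot A' B' + dot B' C' + dot C' A') with (dot A B + dot B C + dot C A) by lra.
  reflexivity.
Qed.

End StandardPosition.

Theorem theorem2p1 (o : point) (r : R) (E : ellipse) :
  0 < r -> wf_ellipse E -> ellipse_inside o r E -> poncelet3 o r E ->
  e_center E = o ->
  forall A B C A' B' C' : point,
    poncelet_triangle o r E A B C -> poncelet_triangle o r E A' B' C' ->
    median_circles_area A B C = median_circles_area A' B' C'.
Proof.
  intros _ (ha & hb & hu) hin _ <- A B C A' B' C' T T'.
  rewrite <- (median_circles_area_frame E hu A B C),
          <- (median_circles_area_frame E hu A' B' C').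
  apply (median_circles_area_std (e_a E) (e_b E) r ha hb).
  - exact (ellipse_inside_frame E hu r hin).
  - exact (poncelet_triangle_frame E hu r A B C T).
  - exact (poncelet_triangle_frame E hu r A' B' C' T').
Qed.
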